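(* Let $Q$ be a finite power associative loop and let $d>1$ be an integer. (i) Suppose that $Q$ has the Cauchy property for every prime $p$ dividing $d$. If $Q$ is uniquely $d$-divisible then $|Q|$ is coprime to $d$. (ii) Suppose that $Q$ has the elementwise Lagrange property. If $|Q|$ is coprime to $d$ then $Q$ is uniquely $d$-divisible.
   Context: A loop is a magma with identity in which all left and right translations are bijections; it is power associative if every element generates a subgroup. $Q$ is uniquely $d$-divisible if $x\mapsto x^d$ is a bijection of $Q$. $Q$ has the Cauchy property for a prime $p$ if whenever $p$ divides $|Q|$ there is $x\in Q$ of order $p$. $Q$ has the elementwise Lagrange property if the order of every element divides $|Q|$. *)

From mathcomp Require Import all_boot.
From mathcomp Require Import boolp.
Set Implicit Arguments. Unset Strict Implicit. Unset Printing Implicit Defensive.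

Definition is_loop (T : finType) (mul : T -> T -> T) (e : T) : Prop :=
  (forall x, mul e x = x /\ mul x e = x) /\
  (forall a, bijective (mul a)) /\
  (forall a, bijective (fun x => mul x a)).

Inductive gen (T : Type) (mul : T -> T -> T) (e x : T) : T -> Prop :=
  | gen_e : gen mul e x e
  | gen_x : gen mul e x x
  | gen_mul a b : gen mul e x a -> gen mul e x b -> gen mul e x (mul a b)
  | gen_ldiv a b y : gen mul e x a -> gen mul e x b -> mul a y = b -> gen mul e x y
  | gen_rdiv a b y : gen mul e x a -> gen mul e x b -> mul y a = b -> gen mul e x y.

(* Power associative: every element generates a subgroup, i.e. the subloop it
   generates is associative (a subloop that is associative is a group). *)
Definition power_assoc (T : finType) (mul : T -> T -> T) (e : T) : Prop :=
  forall x a b c, gen mul e x a -> gen mul e x b -> gen mul e x c ->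
    mul a (mul b c) = mul (mul a b) c.

(* Powers x^n (well-defined unambiguously in a power associative loop). *)
Fixpoint lpow (T : Type) (mul : T -> T -> T) (e x : T) (n : nat) : T :=
  match n with 0 => e | n'.+1 => mul x (lpow mul e x n') end.

Definition lorder (T : finType) (mul : T -> T -> T) (e x : T) : nat :=
  #|[set y : T | `[< gen mul e x y >] ]|.

From mathcomp Require Import all_boot.
From mathcomp Require Import boolp.

(* In a power associative loop the subloop generated by x is the cyclic group
   of the powers of x, so x^n only depends on n modulo the order of x.
   (i) A prime p dividing both |Q| and d yields, by the Cauchy property, an
   element x of order p; then x^d = e = e^d, so the d-th power map is not
   injective.
   (ii) If the order of x is coprime to d, a Bezout coefficient k with
   k d = 1 modulo the order of x gives (x^k)^d = x; thus the d-th power map is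
   surjective, hence bijective since Q is finite. *)

Lemma lpow_gen (T : Type) (mul : T -> T -> T) (e x : T) n :
  gen mul e x (lpow mul e x n).
Proof. by elim: n => [|n IHn] /=; [apply: gen_e | apply: gen_mul (gen_x _ _ _) IHn]. Qed.

Lemma iter_lpow (T : Type) (mul : T -> T -> T) (e x : T) n :
  iter n (mul x) e = lpow mul e x n.
Proof. by elim: n => [|n IHn] //=; rewrite IHn. Qed.

Section PowerAssociativeLoop.

Variables (T : finType) (mul : T -> T -> T) (e : T).
Hypotheses (loopQ : is_loop mul e) (assocQ : power_assoc mul e).

Local Notation pow := (lpow mul e).

Lemma mul1l : left_id e mul. Proof. by move=> x; case: (loopQ.1 x). Qed.

Lemma mul1r : right_id e mul. Proof. by move=> x; case: (loopQ.1 x). Qed.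

Lemma lmulI a : injective (mul a). Proof. exact/bij_inj/(loopQ.2.1 a). Qed.

Lemma rmulI a : injective (mul^~ a). Proof. exact/bij_inj/(loopQ.2.2 a). Qed.

Lemma lpow_e n : pow e n = e.
Proof. by elim: n => [|n IHn] //=; rewrite IHn mul1l. Qed.

Lemma lpowD x m n : pow x (m + n) = mul (pow x m) (pow x n).
Proof.
elim: m => [|m IHm] /=; first by rewrite mul1l.
by rewrite IHm (assocQ x) //; [apply: gen_x | apply: lpow_gen | apply: lpow_gen].
Qed.

Lemma lpowM x m n : pow x (m * n) = pow (pow x m) n.
Proof. by elim: n => [|n IHn]; rewrite ?muln0 // mulnS lpowD IHn. Qed.

Lemma lpow_order x : pow x (order (mul x) e) = e.
Proof. by rewrite -iter_lpow iter_order //; apply: lmulI. Qed.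

Lemma gen_lpow x y : gen mul e x y -> exists n, y = pow x n.
Proof.
set r := order (mul x) e.
have r_gt0 : 0 < r by apply: order_gt0.
have lpow_rM i : pow x (r * i) = e by rewrite lpowM lpow_order lpow_e.
elim=> [|||a b z _ [i ->] _ [j ->] xiz|a b z _ [i ->] _ [j ->] zxi].
- by exists 0.
- by exists 1; rewrite /= mul1r.
- by move=> a b _ [i ->] _ [j ->]; exists (i + j); rewrite lpowD.
(* Division by x^i is multiplication by x^((r - 1) i), as x^(r i) = e. *)
- exists ((r - 1) * i + j); apply: (lmulI (pow x i)).
  rewrite xiz -lpowD addnA -{1}(mul1n i) -mulnDl subnKC //.
  by rewrite lpowD lpow_rM mul1l.
- exists (j + (r - 1) * i); apply: (rmulI (pow x i)) => /=.
  rewrite zxi -lpowD -addnA -{2}(mul1n i) -mulnDl subnK //.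
  by rewrite lpowD lpow_rM mul1r.
Qed.

Lemma lorderE x : lorder mul e x = order (mul x) e.
Proof.
apply: eq_card => y; rewrite inE; apply/asboolP/idP.
- by case/gen_lpow => n ->; rewrite -iter_lpow; apply: fconnect_iter.
- by move/iter_findex <-; rewrite iter_lpow; apply: lpow_gen.
Qed.

Lemma lorder_e : lorder mul e e = 1.
Proof. by rewrite lorderE (_ : mul e = id) ?order_id //; apply/funext/mul1l. Qed.

Lemma lpow_modn x n : pow x (n %% lorder mul e x) = pow x n.
Proof.
rewrite {2}(divn_eq n (lorder mul e x)) lpowD mulnC lpowM lorderE lpow_order.
by rewrite lpow_e mul1l.
Qed.

Lemma lpow_lorder_dvd x n : lorder mul e x %| n -> pow x n = e.
Proof. by move=> /eqP dvd_n; rewrite -lpow_modn dvd_n. Qed.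

Lemma lpow_bij_coprime d :
  (forall p, prime p -> p %| d -> p %| #|T| -> exists x, lorder mul e x = p) ->
  bijective (pow^~ d) -> coprime #|T| d.
Proof.
move=> cauchy /bij_inj pow_inj; apply: contraT => not_coprime.
have T_gt0 : 0 < #|T| by apply/card_gt0P; exists e.
have gcd_gt1 : 1 < gcdn #|T| d by rewrite ltn_neqAle eq_sym not_coprime gcdn_gt0 T_gt0.
set p := pdiv (gcdn #|T| d).
have p_pr : prime p := pdiv_prime gcd_gt1.
have p_T : p %| #|T| := dvdn_trans (pdiv_dvd _) (dvdn_gcdl _ _).
have p_d : p %| d := dvdn_trans (pdiv_dvd _) (dvdn_gcdr _ _).
have [x ox] := cauchy p p_pr p_d p_T.
have x_e : x = e.
  by apply: pow_inj; rewrite /= lpow_e lpow_lorder_dvd ?ox.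
by move: p_pr; rewrite -ox x_e lorder_e.
Qed.

Lemma lpow_rootK d : 0 < d -> (forall x, coprime (lorder mul e x) d) ->
  cancel (fun x => pow x (egcdn d (lorder mul e x)).1) (pow^~ d).
Proof.
move=> d_gt0 coprime_d x; rewrite -lpowM -lpow_modn.
have [k l /= -> _] := egcdnP (lorder mul e x) d_gt0.
have /eqP -> : coprime d (lorder mul e x) by rewrite coprime_sym.
by rewrite modnMDl lpow_modn /= mul1r.
Qed.

Lemma coprime_lpow_bij d : 0 < d -> (forall x, lorder mul e x %| #|T|) ->
  coprime #|T| d -> bijective (pow^~ d).
Proof.
move=> d_gt0 lagrange coprime_T.
have rootK := @lpow_rootK d d_gt0 (fun x => coprime_dvdl (lagrange x) coprime_T).
exact: (bij_can_bij (injF_bij (can_inj rootK)) rootK).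
Qed.

End PowerAssociativeLoop.

Theorem lemma1p6 (T : finType) (mul : T -> T -> T) (e : T) (d : nat) :
  is_loop mul e -> power_assoc mul e -> 1 < d ->
  ((forall p, prime p -> p %| d ->
      (p %| #|T| -> exists x : T, lorder mul e x = p)) ->
    bijective (fun x : T => lpow mul e x d) -> coprime #|T| d) /\
  ((forall x : T, lorder mul e x %| #|T|) ->
    coprime #|T| d -> bijective (fun x : T => lpow mul e x d)).
Proof.
move=> loopQ assocQ d_gt1; split.
- exact: lpow_bij_coprime.
- exact: coprime_lpow_bij (ltnW d_gt1).
Qed.
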